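(* ($\mathrm{ZFCU}_R$) Let $\kappa$ be an infinite cardinal. Assume the DC$_\kappa$-scheme holds and the class $\mathcal{A}$ of urelements is a proper class. Then $\kappa$ is realized.
   Context: $\mathrm{ZFCU}_R$ is ZFC with urelements (language $\{\in,\mathcal{A}\}$, $\mathcal{A}$ the urelement predicate), formulated with Replacement rather than Collection, with AC. ''$\mathcal{A}$ is a proper class'' means there is no set whose members are exactly the urelements. A set is realized if it is equinumerous with some set of urelements. DC$_\kappa$-scheme: for every formula $\varphi$ and parameter $u$, if $\forall x\exists y\varphi(x,y,u)$ then there is a function $f$ with domain $\kappa$ such that $\varphi(f\restriction\alpha,f(\alpha),u)$ for all $\alpha<\kappa$. *)

(* Semantic formalization of ZFCU_R: a statement of the form
   "ZFCU_R + DC_kappa-scheme |- (A is a proper class -> kappa is realized)"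
   is rendered (via completeness) as: in every model of ZFCU_R, for every
   kappa that the model thinks is an infinite cardinal, if the model satisfies
   every instance of the DC_kappa-scheme and thinks A is a proper class, then
   the model thinks kappa is realized. *)
From Stdlib Require Import Arith.

Set Implicit Arguments.

(* First-order formulas in the language {∈, A} (with =), de Bruijn indices. *)
Inductive form : Type :=
| FMem : nat -> nat -> form
| FEq  : nat -> nat -> form
| FUr  : nat -> form
| FBot : form
| FImp : form -> form -> form
| FAll : form -> form.             (* binds var 0 *)

Fixpoint wf (n : nat) (p : form) : Prop :=
  match p with
  | FMem i j => i < n /\ j < n
  | FEq i j => i < n /\ j < n
  | FUr i => i < n
  | FBot => True
  | FImp a b => wf n a /\ wf n b
  | FAll a => wf (S n) a
  end.

Definition scons {M : Type} (x : M) (e : nat -> M) : nat -> M :=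
  fun n => match n with 0 => x | S k => e k end.

Section Model.
Variables (M : Type) (mem : M -> M -> Prop) (U : M -> Prop).

Fixpoint sat (e : nat -> M) (p : form) : Prop :=
  match p with
  | FMem i j => mem (e i) (e j)
  | FEq i j => e i = e j
  | FUr i => U (e i)
  | FBot => False
  | FImp a b => sat e a -> sat e b
  | FAll a => forall x : M, sat (scons x e) a
  end.

Definition isSet (x : M) : Prop := ~ U x.

Definition empty (x : M) : Prop := isSet x /\ forall w, ~ mem w x.

Definition upair (a b s : M) : Prop :=
  isSet s /\ forall z, mem z s <-> (z = a \/ z = b).

Definition opair (a b p : M) : Prop :=
  isSet p /\ forall z, mem z p <-> (upair a a z \/ upair a b z).

Definition succ_of (y z : M) : Prop :=
  isSet z /\ forall w, mem w z <-> (mem w y \/ w = y).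

Definition subset_of (z x : M) : Prop :=
  isSet z /\ forall w, mem w z -> mem w x.

Definition rel (r a b : M) : Prop := exists p, mem p r /\ opair a b p.

Definition well_ordering (r x : M) : Prop :=
  isSet r /\
  (forall p, mem p r -> exists a b, mem a x /\ mem b x /\ opair a b p) /\
  (forall a, mem a x -> ~ rel r a a) /\
  (forall a b c, mem a x -> mem b x -> mem c x -> rel r a b -> rel r b c -> rel r a c) /\
  (forall a b, mem a x -> mem b x -> a = b \/ rel r a b \/ rel r b a) /\
  (forall z, subset_of z x -> (exists w, mem w z) ->
     exists m, mem m z /\ forall w, mem w z -> ~ rel r w m).

Definition bijection (f x y : M) : Prop :=
  isSet f /\
  (forall p, mem p f -> exists a b, mem a x /\ mem b y /\ opair a b p) /\
  (forall a, mem a x -> exists b, rel f a b) /\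
  (forall a b b', rel f a b -> rel f a b' -> b = b') /\
  (forall a a' b, rel f a b -> rel f a' b -> a = a') /\
  (forall b, mem b y -> exists a, rel f a b).

Definition equinumerous (x y : M) : Prop :=
  isSet x /\ isSet y /\ exists f, bijection f x y.

Definition transitive_set (x : M) : Prop :=
  isSet x /\ forall y, mem y x -> isSet y /\ forall z, mem z y -> mem z x.

Definition ordinal (x : M) : Prop :=
  transitive_set x /\ forall y, mem y x -> transitive_set y.

Definition cardinal (k : M) : Prop :=
  ordinal k /\ forall a, mem a k -> ~ equinumerous a k.

Definition natural (n : M) : Prop :=
  ordinal n /\
  forall m, (m = n \/ mem m n) -> (empty m \/ exists y, succ_of y m).

Definition finite (x : M) : Prop := exists n, natural n /\ equinumerous x n.

Definition infinite_cardinal (k : M) : Prop := cardinal k /\ ~ finite k.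

Definition realized (x : M) : Prop :=
  exists s, isSet s /\ (forall a, mem a s -> U a) /\ equinumerous x s.

Definition A_proper_class : Prop :=
  ~ exists s, isSet s /\ forall x, mem x s <-> U x.

Definition func (f : M) : Prop :=
  isSet f /\ (forall p, mem p f -> exists a b, opair a b p) /\
  (forall a b b', rel f a b -> rel f a b' -> b = b').

Definition restr (f a r : M) : Prop :=
  isSet r /\ forall p, mem p r <-> (mem p f /\ exists x y, opair x y p /\ mem x a).

(* ZFCU_R (Replacement instead of Collection, with AC) *)
Record ZFCU_R : Prop := {
  ax_urelements : forall x, U x -> forall y, ~ mem y x;
  ax_ext : forall x y, isSet x -> isSet y -> (forall z, mem z x <-> mem z y) -> x = y;
  ax_found : forall x, (exists y, mem y x) ->
               exists y, mem y x /\ ~ exists z, mem z y /\ mem z x;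
  ax_pair : forall a b, exists s, upair a b s;
  ax_union : forall x, isSet x -> exists s, isSet s /\
               forall z, mem z s <-> exists y, mem y x /\ mem z y;
  ax_power : forall x, isSet x -> exists p, isSet p /\
               forall z, mem z p <-> subset_of z x;
  ax_inf : exists i, isSet i /\ (exists e, empty e /\ mem e i) /\
             forall y, mem y i -> exists z, succ_of y z /\ mem z i;
  ax_sep : forall (phi : form) (e : nat -> M) (a : M), isSet a ->
             exists b, isSet b /\
               forall x, mem x b <-> (mem x a /\ sat (scons x e) phi);
  ax_repl : forall (phi : form) (e : nat -> M) (a : M), isSet a ->
             (forall x, mem x a -> exists y, sat (scons x (scons y e)) phi /\
                 forall y', sat (scons x (scons y' e)) phi -> y' = y) ->
             exists b, isSet b /\
               forall y, mem y b <-> exists x, mem x a /\ sat (scons x (scons y e)) phi;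
  ax_choice : forall x, isSet x -> exists r, well_ordering r x
}.

Definition env3 (x y u : M) : nat -> M :=
  fun n => match n with 0 => x | 1 => y | _ => u end.

Definition DC_scheme (k : M) : Prop :=
  forall phi : form, wf 3 phi -> forall u : M,
    (forall x, exists y, sat (env3 x y u) phi) ->
    exists f, func f /\ (forall a, (exists b, rel f a b) <-> mem a k) /\
      forall a, mem a k ->
        exists r b, restr f a r /\ rel f a b /\ sat (env3 r b u) phi.

End Model.

From Stdlib Require Import Classical Lia.

Set Implicit Arguments.

(* Iterate DC_kappa on the relation "y is an urelement outside the union of
   the union of x".  Since A is a proper class, the urelements of any set
   never exhaust A, so the hypothesis of DC_kappa holds, and we obtain
   f : kappa -> A with f(alpha) outside the union of the union of f|alpha.
   As f(beta) lies in the pair (beta, f(beta)), which belongs to f|alpha for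
   beta < alpha, f is injective; its range is a set of urelements, so kappa
   is realized. *)

Definition FNot (p : form) : form := FImp p FBot.
Definition FOr (p q : form) : form := FImp (FNot p) q.
Definition FAnd (p q : form) : form := FNot (FImp p (FNot q)).
Definition FAllIn (i : nat) (p : form) : form := FAll (FImp (FMem 0 (S i)) p).
Definition FCmp (i j : nat) : form := FOr (FMem i j) (FOr (FEq i j) (FMem j i)).

(* In [fresh_form], var 0 is x and var 1 is y; under the two bounded
   quantifiers y becomes var 3. *)
Definition fresh_form : form :=
  FAnd (FUr 1) (FAllIn 0 (FAllIn 0 (FNot (FMem 3 0)))).

Section ZFCU.

Variables (M : Type) (mem : M -> M -> Prop) (U : M -> Prop).

Local Notation sat := (sat mem U).
Local Notation isSet := (isSet U).
Local Notation opair := (opair mem U).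
Local Notation rel := (rel mem U).
Local Notation func := (func mem U).
Local Notation restr := (restr mem U).
Local Notation ordinal := (ordinal mem U).

Definition comparable (x y : M) : Prop := mem x y \/ x = y \/ mem y x.

Definition in_union2 (z x : M) : Prop :=
  exists p q, mem p x /\ mem q p /\ mem z q.

Lemma sat_FNot e p : sat e (FNot p) <-> ~ sat e p.
Proof. reflexivity. Qed.

Lemma sat_FOr e p q : sat e (FOr p q) <-> sat e p \/ sat e q.
Proof.
  simpl; split; [|tauto].
  intro H; destruct (classic (sat e p)); tauto.
Qed.

Lemma sat_FAnd e p q : sat e (FAnd p q) <-> sat e p /\ sat e q.
Proof.
  simpl; split; [|tauto].
  intro H; split; apply NNPP; tauto.
Qed.

Lemma sat_FAllIn e i p :
  sat e (FAllIn i p) <-> forall z, mem z (e i) -> sat (scons z e) p.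
Proof. reflexivity. Qed.

Lemma sat_FCmp x y e :
  sat (scons y (scons x e)) (FCmp 1 0) <-> comparable x y.
Proof. unfold FCmp, comparable; rewrite !sat_FOr; reflexivity. Qed.

Lemma sat_fresh_form x y u :
  sat (env3 x y u) fresh_form <-> U y /\ ~ in_union2 y x.
Proof.
  unfold fresh_form, in_union2; rewrite sat_FAnd; simpl.
  split; intros [Uy Hy]; split; auto.
  - intros (p & q & Hp & Hq & Hyq); exact (Hy p Hp q Hq Hyq).
  - intros p Hp q Hq Hyq; apply Hy; exists p, q; auto.
Qed.

Lemma wf_fresh_form : wf 3 fresh_form.
Proof. simpl; lia. Qed.

Hypothesis ZF : ZFCU_R mem U.

Lemma definable_minimal phi e a :
  isSet a -> (exists x, mem x a /\ sat (scons x e) phi) ->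
  exists x, mem x a /\ sat (scons x e) phi /\
    forall y, mem y x -> mem y a -> ~ sat (scons y e) phi.
Proof.
  intros Ha [x [Hxa Hx]].
  destruct (ax_sep ZF phi e Ha) as [b [_ Hb]].
  destruct (ax_found ZF b) as [m [Hmb Hmin]]; [exists x; apply Hb; auto|].
  apply Hb in Hmb as [Hma Hm].
  exists m; repeat split; auto.
  intros y Hym Hya Hy; apply Hmin; exists y; split; auto; apply Hb; auto.
Qed.

Lemma comparable_of_members k a b :
  ordinal k -> mem a k -> mem b k ->
  (forall x, mem x a -> comparable x b) ->
  (forall y, mem y b -> comparable a y) -> comparable a b.
Proof.
  intros [_ Hk] Ha Hb Hab Hba.
  destruct (Hk a Ha) as [Has Hat], (Hk b Hb) as [Hbs Hbt].
  destruct (classic (mem a b)) as [|Hnab]; [now left|].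
  destruct (classic (mem b a)) as [|Hnba]; [now right; right|].
  right; left; apply (ax_ext ZF); auto; intro z; split; intro Hz.
  - destruct (Hab z Hz) as [|[->|Hbz]]; [auto|contradiction|].
    exfalso; exact (Hnba (proj2 (Hat z Hz) b Hbz)).
  - destruct (Hba z Hz) as [Haz|[<-|]]; [|contradiction|auto].
    exfalso; exact (Hnab (proj2 (Hbt z Hz) a Haz)).
Qed.

Lemma ordinal_members_comparable k a b :
  ordinal k -> mem a k -> mem b k -> comparable a b.
Proof.
  intros Hk Ha Hb; apply NNPP; intro Hab.
  pose proof Hk as [[Hks Hkt] _].
  (* Take a0 in k minimal among members incomparable with some member of k,
     then b0 in k minimal among members incomparable with a0; by minimality
     the hypotheses of [comparable_of_members] hold for a0 and b0. *)
  destruct (definable_minimal (FNot (FAllIn 1 (FCmp 1 0))) (fun _ => k) Hks)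
    as (a0 & Ha0 & Hna0 & Hmin_a).
  { exists a; split; auto.
    rewrite sat_FNot, sat_FAllIn; intro H.
    apply Hab; exact (proj1 (sat_FCmp _ _ _) (H b Hb)). }
  destruct (definable_minimal (FNot (FCmp 1 0)) (scons a0 (fun _ => k)) Hks)
    as (b0 & Hb0 & Hnb0 & Hmin_b).
  { apply NNPP; intro Hall; apply Hna0.
    rewrite sat_FAllIn; intros y Hy.
    apply NNPP; intro Hny; apply Hall; exists y; auto. }
  apply Hnb0, (sat_FCmp a0 b0 (fun _ => k)).
  apply (comparable_of_members Hk Ha0 Hb0).
  - intros x Hx.
    assert (Hxk : mem x k) by exact (proj2 (Hkt a0 Ha0) x Hx).
    apply NNPP; intro Hnx; apply (Hmin_a x Hx Hxk).
    rewrite sat_FNot, sat_FAllIn; intro H.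
    apply Hnx; exact (proj1 (sat_FCmp _ _ _) (H b0 Hb0)).
  - intros y Hy.
    assert (Hyk : mem y k) by exact (proj2 (Hkt b0 Hb0) y Hy).
    apply NNPP; intro Hny; apply (Hmin_b y Hy Hyk).
    rewrite sat_FNot, sat_FCmp; exact Hny.
Qed.

Lemma union2_exists x :
  isSet x -> exists s, isSet s /\ forall z, mem z s <-> in_union2 z x.
Proof.
  intro Hx.
  destruct (ax_union ZF Hx) as [s1 [Hs1 Hmem1]].
  destruct (ax_union ZF Hs1) as [s2 [Hs2 Hmem2]].
  exists s2; split; auto; intro z; rewrite Hmem2; split.
  - intros (q & Hq & Hzq); apply Hmem1 in Hq as (p & Hp & Hqp); exists p, q; auto.
  - intros (p & q & Hp & Hqp & Hzq); exists q; split; auto; apply Hmem1; exists p; auto.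
Qed.

Lemma urelements_of x :
  isSet x -> exists s, isSet s /\ forall z, mem z s <-> mem z x /\ U z.
Proof. exact (fun Hx => ax_sep ZF (FUr 0) (fun _ => x) Hx). Qed.

Lemma urelement_exists : A_proper_class mem U -> exists y, U y.
Proof.
  intro HA; apply NNPP; intro Hno; apply HA.
  destruct (ax_inf ZF) as (_ & _ & (e & [He Hempty] & _) & _).
  exists e; split; auto; intro z; split; intro Hz.
  - exfalso; exact (Hempty z Hz).
  - exfalso; apply Hno; exists z; exact Hz.
Qed.

Lemma fresh_urelement :
  A_proper_class mem U -> forall x, exists y, U y /\ ~ in_union2 y x.
Proof.
  intros HA x.
  destruct (classic (U x)) as [Ux|Hx].
  - destruct (urelement_exists HA) as [y Uy].
    exists y; split; auto.
    intros (p & _ & Hp & _); exact (ax_urelements ZF x Ux p Hp).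
  - destruct (union2_exists Hx) as [s [Hs Hmem_s]].
    destruct (urelements_of Hs) as [t [Ht Hmem_t]].
    apply NNPP; intro Hno; apply HA.
    exists t; split; auto; intro z; rewrite Hmem_t, Hmem_s; split; [tauto|].
    intro Uz; split; auto; apply NNPP; intro Hz; apply Hno; exists z; auto.
Qed.

Lemma opair_mem_inv a b p q z :
  opair a b p -> mem q p -> mem z q -> z = a \/ z = b.
Proof.
  intros [_ Hp] Hq Hz.
  apply Hp in Hq as [[_ Hq]|[_ Hq]]; apply Hq in Hz; tauto.
Qed.

Lemma opair_in_union2 a b p x : mem p x -> opair a b p -> in_union2 b x.
Proof.
  intros Hpx [_ Hp].
  destruct (ax_pair ZF a b) as [q Hq].
  exists p, q; repeat split; auto.
  - apply Hp; auto.
  - apply (proj2 Hq); auto.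
Qed.

Lemma rel_restr_in_union2 f a r x b :
  restr f a r -> rel f x b -> mem x a -> in_union2 b r.
Proof.
  intros [_ Hr] (p & Hp & Hop) Hx.
  refine (opair_in_union2 _ Hop).
  apply Hr; split; auto; exists x, b; auto.
Qed.

Lemma ordinal_mem_isSet k a : ordinal k -> mem a k -> isSet a.
Proof. intros [[_ Hk] _] Ha; exact (proj1 (Hk a Ha)). Qed.

Lemma fresh_sequence k :
  A_proper_class mem U -> DC_scheme mem U k ->
  exists f, func f /\ (forall a, (exists b, rel f a b) <-> mem a k) /\
    (forall a b, rel f a b -> U b) /\
    (forall a b, rel f a b -> exists r, restr f a r /\ ~ in_union2 b r).
Proof.
  intros HA HDC.
  destruct (HDC fresh_form wf_fresh_form k) as (f & Hf & Hdom & Hval).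
  { intro x; destruct (fresh_urelement HA x) as [y Hy].
    exists y; apply sat_fresh_form, Hy. }
  assert (Hfresh : forall a b, rel f a b ->
            U b /\ exists r, restr f a r /\ ~ in_union2 b r).
  { intros a b Hab.
    destruct (Hval a (proj1 (Hdom a) (ex_intro _ b Hab)))
      as (r & b' & Hr & Hab' & Hsat).
    apply sat_fresh_form in Hsat as [Ub' Hb'].
    destruct Hf as (_ & _ & Hfun).
    rewrite <- (Hfun a b' b Hab' Hab).
    split; auto; exists r; auto. }
  exists f; split; [exact Hf|split; [exact Hdom|split]];
    intros a b Hab; apply (Hfresh a b Hab).
Qed.

Lemma fresh_sequence_injective k f :
  ordinal k -> (forall a, (exists b, rel f a b) <-> mem a k) ->
  (forall a b, rel f a b -> exists r, restr f a r /\ ~ in_union2 b r) ->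
  forall a a' b, rel f a b -> rel f a' b -> a = a'.
Proof.
  intros Hk Hdom Hfresh.
  assert (Hearlier : forall a a' b, rel f a b -> rel f a' b -> ~ mem a a').
  { intros a a' b Hab Ha'b Haa'.
    destruct (Hfresh a' b Ha'b) as (r & Hr & Hb).
    exact (Hb (rel_restr_in_union2 Hr Hab Haa')). }
  intros a a' b Hab Ha'b.
  assert (Ha : mem a k) by (apply Hdom; exists b; exact Hab).
  assert (Ha' : mem a' k) by (apply Hdom; exists b; exact Ha'b).
  destruct (ordinal_members_comparable Hk Ha Ha') as [H|[H|H]].
  - exfalso; exact (Hearlier a a' b Hab Ha'b H).
  - exact H.
  - exfalso; exact (Hearlier a' a b Ha'b Hab H).
Qed.

Lemma range_of_urelement_valued f :
  func f -> (forall a b, rel f a b -> isSet a /\ U b) ->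
  exists s, isSet s /\ forall b, mem b s <-> exists a, rel f a b.
Proof.
  intros Hf Hval; pose proof Hf as (Hfs & Hpairs & _).
  destruct (union2_exists Hfs) as [s [Hs Hmem_s]].
  destruct (urelements_of Hs) as [t [Ht Hmem_t]].
  exists t; split; auto; intro b; rewrite Hmem_t, Hmem_s; split.
  - intros [(p & q & Hp & Hq & Hbq) Ub].
    destruct (Hpairs p Hp) as (a & c & Hop).
    assert (Hac : rel f a c) by (exists p; auto).
    destruct (opair_mem_inv Hop Hq Hbq) as [-> | ->].
    + exfalso; exact (proj1 (Hval a c Hac) Ub).
    + exists a; exact Hac.
  - intros [a Hab]; split; [|exact (proj2 (Hval a b Hab))].
    destruct Hab as (p & Hp & Hop); exact (opair_in_union2 Hp Hop).
Qed.

Lemma injective_func_bijection f x y :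
  func f -> (forall a, (exists b, rel f a b) <-> mem a x) ->
  (forall b, mem b y <-> exists a, rel f a b) ->
  (forall a a' b, rel f a b -> rel f a' b -> a = a') -> bijection mem U f x y.
Proof.
  intros (Hfs & Hpairs & Hfun) Hdom Hran Hinj.
  split; [exact Hfs|]; split; [|split; [|split; [exact Hfun|split; [exact Hinj|]]]].
  - intros p Hp; destruct (Hpairs p Hp) as (a & b & Hop).
    assert (Hab : rel f a b) by (exists p; auto).
    exists a, b; split; [|split; [|exact Hop]].
    + apply Hdom; exists b; exact Hab.
    + apply Hran; exists a; exact Hab.
  - intros a Ha; apply Hdom, Ha.
  - intros b Hb; apply Hran, Hb.
Qed.

End ZFCU.

Theorem mainTheorem6 :
  forall (M : Type) (mem : M -> M -> Prop) (U : M -> Prop),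
    ZFCU_R mem U ->
    forall kappa : M,
      infinite_cardinal mem U kappa ->
      DC_scheme mem U kappa ->
      A_proper_class mem U ->
      realized mem U kappa.
Proof.
  intros M mem U ZF k [[Hk _] _] HDC HA.
  destruct (fresh_sequence ZF HA HDC) as (f & Hf & Hdom & Hur & Hfresh).
  assert (Hval : forall a b, rel mem U f a b -> isSet U a /\ U b).
  { intros a b Hab; split; [|exact (Hur a b Hab)].
    apply (ordinal_mem_isSet a Hk), Hdom; exists b; exact Hab. }
  destruct (range_of_urelement_valued ZF Hf Hval) as (s & Hs & Hran).
  exists s; split; [exact Hs|]; split.
  - intros b Hb; apply Hran in Hb as [a Hab]; exact (Hur a b Hab).
  - split; [exact (proj1 (proj1 Hk))|]; split; [exact Hs|]; exists f.
    apply injective_func_bijection; [exact Hf | exact Hdom | exact Hran |].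
    exact (fresh_sequence_injective ZF Hk Hdom Hfresh).
Qed.
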